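(* Let $\mathcal V$ be a subvariety of the variety of pseudo-Kleene lattices. Then every member of $\mathcal V$ is super-paraorthomodular if and only if $\mathcal V$ contains no member isomorphic to $\mathbf B_6$, to $\mathbf B_8^*$, or to $\mathbf B_{10}$.
   Context: A pseudo-Kleene lattice is an algebra $(A,\land,\lor,{}',0,1)$ that is a bounded lattice with an antitone involution ${}'$ ($x\leq y\Rightarrow y'\leq x'$, $x''=x$) satisfying $x\land x'\leq y\lor y'$. It is super-paraorthomodular if for all $x,y$: (SP1) $x\leq y$ and $x'\land y=(x\land x')\lor(y\land y')$ imply $y\land(x\lor x')=x\lor(y\land y')$; (SP2) $x\leq y$ implies $(x\land x')\lor(y\land y')=(x'\land y)\land(x'\land y)'$. In the following finite pseudo-Kleene lattices the involution maps $u\leftrightarrow u'$, $0\leftrightarrow 1$. $\mathbf B_6$: elements $0,x,y,y',x',1$, covers $0\prec x\prec y\prec 1$, $0\prec y'\prec x'\prec 1$. $\mathbf B_8^*$: elements $0,x,y,z,z',y',x',1$, covers $0\prec x$, $0\prec y$, $x\prec z$, $y\prec z'$, $z\prec z'$, $z\prec y'$, $z'\prec x'$, $y'\prec 1$, $x'\prec 1$. $\mathbf B_{10}$: elements $0,x,y',m,a,a',x',y,m',1$, covers $0\prec y'$, $0\prec m$, $0\prec x$, $y'\prec a'$, $m\prec a'$, $m\prec a$, $x\prec a$, $a'\prec x'$, $a'\prec m'$, $a\prec m'$, $a\prec y$, $x'\prec 1$, $m'\prec 1$, $y\prec 1$. *)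

From mathcomp Require Import all_boot.
Set Implicit Arguments. Unset Strict Implicit. Unset Printing Implicit Defensive.

Record Alg := MkAlg {
  car :> Type;
  mt : car -> car -> car;
  jn : car -> car -> car;
  ng : car -> car;
  zr : car;
  on : car }.

Definition ale (A : Alg) (x y : A) : Prop := mt x y = x.

Definition is_PKL (A : Alg) : Prop :=
  (forall x y : A, mt x y = mt y x) /\
  (forall x y : A, jn x y = jn y x) /\
  (forall x y z : A, mt x (mt y z) = mt (mt x y) z) /\
  (forall x y z : A, jn x (jn y z) = jn (jn x y) z) /\
  (forall x y : A, mt x (jn x y) = x) /\
  (forall x y : A, jn x (mt x y) = x) /\
  (forall x : A, mt x (on A) = x) /\
  (forall x : A, jn x (zr A) = x) /\
  (forall x : A, ng (ng x) = x) /\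
  (forall x y : A, ale x y -> ale (ng y) (ng x)) /\
  (forall x y : A, ale (mt x (ng x)) (jn y (ng y))).

Definition is_SPOML (A : Alg) : Prop :=
  (forall x y : A, ale x y ->
     mt (ng x) y = jn (mt x (ng x)) (mt y (ng y)) ->
     mt y (jn x (ng x)) = jn x (mt y (ng y))) /\
  (forall x y : A, ale x y ->
     jn (mt x (ng x)) (mt y (ng y)) = mt (mt (ng x) y) (ng (mt (ng x) y))).

Inductive term : Type :=
| TVar : nat -> term
| TMeet : term -> term -> term
| TJoin : term -> term -> term
| TNeg : term -> term
| TZero : term
| TOne : term.

Fixpoint teval (A : Alg) (v : nat -> A) (t : term) : A :=
  match t with
  | TVar i => v i
  | TMeet p q => mt (teval v p) (teval v q)
  | TJoin p q => jn (teval v p) (teval v q)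
  | TNeg p => ng (teval v p)
  | TZero => zr A
  | TOne => on A
  end.

Definition satisfies (A : Alg) (e : term * term) : Prop :=
  forall v : nat -> A, teval v e.1 = teval v e.2.

(* The subvariety of pseudo-Kleene lattices axiomatized (relative to the
   PKL axioms) by the set of identities E.  Every subvariety of PKL is of
   this form (Birkhoff), and every such class is a subvariety. *)
Definition in_subvariety (E : term * term -> Prop) (A : Alg) : Prop :=
  is_PKL A /\ forall e, E e -> satisfies A e.

Definition alg_iso (A B : Alg) : Prop :=
  exists (f : A -> B) (g : B -> A),
    cancel f g /\ cancel g f /\
    (forall x y, f (mt x y) = mt (f x) (f y)) /\
    (forall x y, f (jn x y) = jn (f x) (f y)) /\
    (forall x, f (ng x) = ng (f x)) /\
    f (zr A) = zr B /\ f (on A) = on B.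

(* Finite lattices given by their Hasse diagram.
   All of this is computable (closed terms reduce by vm_compute). *)
Section FinAlg.
Variables (T : Type) (enum : seq T) (code : T -> nat) (cov : seq (nat * nat)).
Variables (neg : T -> T) (bot top : T).

Definition step (S : seq nat) : seq nat :=
  undup (S ++ [seq c.2 | c <- cov & c.1 \in S]).
Definition fle (x y : T) : bool :=
  code y \in iter (size enum) step [:: code x].
Definition is_glb (x y z : T) : bool :=
  [&& fle z x, fle z y & all (fun w => (fle w x && fle w y) ==> fle w z) enum].
Definition is_lub (x y z : T) : bool :=
  [&& fle x z, fle y z & all (fun w => (fle x w && fle y w) ==> fle z w) enum].
Definition fmeet (x y : T) : T := head x (filter (is_glb x y) enum).
Definition fjoin (x y : T) : T := head x (filter (is_lub x y) enum).
Definition fin_alg : Alg := @MkAlg T fmeet fjoin neg bot top.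
End FinAlg.

(* B6: elements 0,x,y,y',x',1; covers 0<x<y<1, 0<y'<x'<1 *)
Inductive E6 := b6_0 | b6_x | b6_y | b6_y' | b6_x' | b6_1.
Definition code6 (e : E6) : nat :=
  match e with b6_0 => 0 | b6_x => 1 | b6_y => 2 | b6_y' => 3 | b6_x' => 4 | b6_1 => 5 end.
Definition neg6 (e : E6) : E6 :=
  match e with b6_0 => b6_1 | b6_x => b6_x' | b6_y => b6_y' | b6_y' => b6_y
  | b6_x' => b6_x | b6_1 => b6_0 end.
Definition B6 : Alg :=
  fin_alg [:: b6_0; b6_x; b6_y; b6_y'; b6_x'; b6_1] code6
    [:: (0,1); (1,2); (2,5); (0,3); (3,4); (4,5)] neg6 b6_0 b6_1.

(* B8*: elements 0,x,y,z,z',y',x',1; covers 0<x, 0<y, x<z, y<z', z<z',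
   z<y', z'<x', y'<1, x'<1 *)
Inductive E8 := b8_0 | b8_x | b8_y | b8_z | b8_z' | b8_y' | b8_x' | b8_1.
Definition code8 (e : E8) : nat :=
  match e with b8_0 => 0 | b8_x => 1 | b8_y => 2 | b8_z => 3 | b8_z' => 4
  | b8_y' => 5 | b8_x' => 6 | b8_1 => 7 end.
Definition neg8 (e : E8) : E8 :=
  match e with b8_0 => b8_1 | b8_x => b8_x' | b8_y => b8_y' | b8_z => b8_z'
  | b8_z' => b8_z | b8_y' => b8_y | b8_x' => b8_x | b8_1 => b8_0 end.
Definition B8s : Alg :=
  fin_alg [:: b8_0; b8_x; b8_y; b8_z; b8_z'; b8_y'; b8_x'; b8_1] code8
    [:: (0,1); (0,2); (1,3); (2,4); (3,4); (3,5); (4,6); (5,7); (6,7)]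
    neg8 b8_0 b8_1.

(* B10: elements 0,x,y',m,a,a',x',y,m',1; covers 0<y', 0<m, 0<x, y'<a',
   m<a', m<a, x<a, a'<x', a'<m', a<m', a<y, x'<1, m'<1, y<1 *)
Inductive E10 := b10_0 | b10_x | b10_y' | b10_m | b10_a | b10_a' | b10_x'
  | b10_y | b10_m' | b10_1.
Definition code10 (e : E10) : nat :=
  match e with b10_0 => 0 | b10_x => 1 | b10_y' => 2 | b10_m => 3 | b10_a => 4
  | b10_a' => 5 | b10_x' => 6 | b10_y => 7 | b10_m' => 8 | b10_1 => 9 end.
Definition neg10 (e : E10) : E10 :=
  match e with b10_0 => b10_1 | b10_x => b10_x' | b10_y' => b10_y
  | b10_m => b10_m' | b10_a => b10_a' | b10_a' => b10_a | b10_x' => b10_x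
  | b10_y => b10_y' | b10_m' => b10_m | b10_1 => b10_0 end.
Definition B10 : Alg :=
  fin_alg [:: b10_0; b10_x; b10_y'; b10_m; b10_a; b10_a'; b10_x'; b10_y;
              b10_m'; b10_1] code10
    [:: (0,2); (0,3); (0,1); (2,5); (3,5); (3,4); (1,4); (5,6); (5,8);
        (4,8); (4,7); (6,9); (8,9); (7,9)] neg10 b10_0 b10_1.

(* If a pseudo-Kleene lattice A violates SP1 or SP2 at some x <= y, one of
   B6, B8*, B10 lies in the variety generated by A.  To each element b of the
   small lattice we attach a term lam b in x and y and the interval
   [lam b, (lam b')'] of A.  These intervals are closed under the operations
   and pairwise disjoint, so their union is a subalgebra of A which maps onto
   the small lattice.  The inequalities between the terms needed for closure
   are found by a sound proof search; disjointness reduces, by moving pairs of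
   elements along unary polynomials, to the disjointness of a single pair of
   intervals, and that is exactly where the failure of SP1 or SP2 enters.
   Conversely, B6, B8* and B10 themselves violate SP1 or SP2. *)

From HB Require Import structures.
From mathcomp Require Import all_boot.
From Stdlib Require Import Classical.
Set Implicit Arguments. Unset Strict Implicit. Unset Printing Implicit Defensive.

Section PKLTheory.
Variable A : Alg.
Hypothesis HA : is_PKL A.

Lemma meetC (x y : A) : mt x y = mt y x. Proof. by case: HA. Qed.
Lemma joinC (x y : A) : jn x y = jn y x. Proof. by case: HA => _ []. Qed.
Lemma meetA (x y z : A) : mt x (mt y z) = mt (mt x y) z.
Proof. by case: HA => _ [] _ []. Qed.
Lemma joinA (x y z : A) : jn x (jn y z) = jn (jn x y) z.
Proof. by case: HA => _ [] _ [] _ []. Qed.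
Lemma meetKU (x y : A) : mt x (jn x y) = x.
Proof. by case: HA => _ [] _ [] _ [] _ []. Qed.
Lemma joinKI (x y : A) : jn x (mt x y) = x.
Proof. by case: HA => _ [] _ [] _ [] _ [] _ []. Qed.
Lemma meetx1 (x : A) : mt x (on A) = x.
Proof. by case: HA => _ [] _ [] _ [] _ [] _ [] _ []. Qed.
Lemma joinx0 (x : A) : jn x (zr A) = x.
Proof. by case: HA => _ [] _ [] _ [] _ [] _ [] _ [] _ []. Qed.
Lemma negK (x : A) : ng (ng x) = x.
Proof. by case: HA => _ [] _ [] _ [] _ [] _ [] _ [] _ [] _ []. Qed.
Lemma ale_neg (x y : A) : ale x y -> ale (ng y) (ng x).
Proof. by case: HA => _ [] _ [] _ [] _ [] _ [] _ [] _ [] _ [] _ [] H _; apply: H. Qed.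
Lemma ale_meet_neg_join_neg (x y : A) : ale (mt x (ng x)) (jn y (ng y)).
Proof. by case: HA => _ [] _ [] _ [] _ [] _ [] _ [] _ [] _ [] _ [] _ H; apply: H. Qed.

Lemma meetxx (x : A) : mt x x = x.
Proof. by rewrite -{2}(joinKI x x) meetKU. Qed.
Lemma alexx (x : A) : ale x x. Proof. exact: meetxx. Qed.
Lemma ale_trans (y x z : A) : ale x y -> ale y z -> ale x z.
Proof. by rewrite /ale => xy yz; rewrite -xy -meetA yz. Qed.
Lemma ale_anti (x y : A) : ale x y -> ale y x -> x = y.
Proof. by rewrite /ale => xy yx; rewrite -xy meetC yx. Qed.
Lemma aleEjoin (x y : A) : ale x y <-> jn x y = y.
Proof. by split => [<-|<-]; [rewrite joinC meetC joinKI | rewrite /ale meetKU]. Qed.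
Lemma ale_meetl (x y : A) : ale (mt x y) x.
Proof. by rewrite /ale meetC meetA meetxx. Qed.
Lemma ale_meetr (x y : A) : ale (mt x y) y.
Proof. by rewrite /ale -meetA meetxx. Qed.
Lemma ale_meet (x y z : A) : ale z x -> ale z y -> ale z (mt x y).
Proof. by rewrite /ale => zx zy; rewrite meetA zx zy. Qed.
Lemma ale_joinl (x y : A) : ale x (jn x y). Proof. exact: meetKU. Qed.
Lemma ale_joinr (x y : A) : ale y (jn x y). Proof. by rewrite joinC; exact: meetKU. Qed.
Lemma ale_join (x y z : A) : ale x z -> ale y z -> ale (jn x y) z.
Proof. by move=> /aleEjoin xz /aleEjoin yz; apply/aleEjoin; rewrite -joinA yz xz. Qed.
Lemma ale0x (x : A) : ale (zr A) x. Proof. by apply/aleEjoin; rewrite joinC joinx0. Qed.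
Lemma alex1 (x : A) : ale x (on A). Proof. exact: meetx1. Qed.

Lemma ale_meet_trans_l (x y z : A) : ale x z -> ale (mt x y) z.
Proof. exact/ale_trans/ale_meetl. Qed.
Lemma ale_meet_trans_r (x y z : A) : ale y z -> ale (mt x y) z.
Proof. exact/ale_trans/ale_meetr. Qed.
Lemma ale_join_trans_l (x y z : A) : ale x y -> ale x (jn y z).
Proof. by move=> xy; apply: ale_trans xy (ale_joinl _ _). Qed.
Lemma ale_join_trans_r (x y z : A) : ale x z -> ale x (jn y z).
Proof. by move=> xz; apply: ale_trans xz (ale_joinr _ _). Qed.

Lemma ale_negr (x y : A) : ale x (ng y) -> ale y (ng x).
Proof. by move/ale_neg; rewrite negK. Qed.
Lemma negJ (x y : A) : ng (jn x y) = mt (ng x) (ng y).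
Proof.
apply: ale_anti.
  by apply: ale_meet; apply: ale_neg; [exact: ale_joinl | exact: ale_joinr].
by apply: ale_negr; apply: ale_join; apply: ale_negr; [exact: ale_meetl | exact: ale_meetr].
Qed.
Lemma negM (x y : A) : ng (mt x y) = jn (ng x) (ng y).
Proof. by rewrite -{1}(negK x) -{1}(negK y) -negJ negK. Qed.
Lemma neg0 : ng (zr A) = on A.
Proof. by apply: ale_anti; [exact: alex1 | apply: ale_negr; exact: ale0x]. Qed.
Lemma neg1 : ng (on A) = zr A.
Proof. by rewrite -neg0 negK. Qed.

Lemma ale_kleene (s t : A) : ale s (ng s) -> ale (ng t) t -> ale s t.
Proof.
move=> ss' /aleEjoin t't; have := ale_meet_neg_join_neg s t.
by rewrite ss' joinC t't.
Qed.

End PKLTheory.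

(* Lattice terms in negation normal form; [NCoVar i] is the negation of the
   [i]-th variable. *)
Inductive nterm :=
| NVar of nat | NCoVar of nat | NBot | NTop
| NMeet of nterm & nterm | NJoin of nterm & nterm.

Fixpoint nterm_eqb (s t : nterm) : bool :=
  match s, t with
  | NVar i, NVar j | NCoVar i, NCoVar j => i == j
  | NBot, NBot | NTop, NTop => true
  | NMeet s1 s2, NMeet t1 t2 | NJoin s1 s2, NJoin t1 t2 =>
      nterm_eqb s1 t1 && nterm_eqb s2 t2
  | _, _ => false
  end.

Lemma nterm_eqP : Equality.axiom nterm_eqb.
Proof.
elim=> [i|i|||s1 IH1 s2 IH2|s1 IH1 s2 IH2] [j|j|||t1 t2|t1 t2] /=;
  try by constructor.
- by apply: (iffP eqP) => [->|[]].
- by apply: (iffP eqP) => [->|[]].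
- by apply: (iffP andP) => [[/IH1-> /IH2->] | [<- <-]]; split; [apply/IH1 | apply/IH2].
- by apply: (iffP andP) => [[/IH1-> /IH2->] | [<- <-]]; split; [apply/IH1 | apply/IH2].
Qed.

HB.instance Definition _ := hasDecEq.Build nterm nterm_eqP.

Fixpoint nneg (s : nterm) : nterm :=
  match s with
  | NVar i => NCoVar i | NCoVar i => NVar i | NBot => NTop | NTop => NBot
  | NMeet s1 s2 => NJoin (nneg s1) (nneg s2)
  | NJoin s1 s2 => NMeet (nneg s1) (nneg s2)
  end.

Definition meet_args (s : nterm) := if s is NMeet s1 s2 then Some (s1, s2) else None.
Definition join_args (s : nterm) := if s is NJoin s1 s2 then Some (s1, s2) else None.

Lemma meet_argsP s s1 s2 : meet_args s = Some (s1, s2) -> s = NMeet s1 s2.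
Proof. by case: s => // ? ? [-> ->]. Qed.
Lemma join_argsP s s1 s2 : join_args s = Some (s1, s2) -> s = NJoin s1 s2.
Proof. by case: s => // ? ? [-> ->]. Qed.

Section Prover.
Variable hyps : seq (nterm * nterm).

(* A bounded proof search for [s <= t] from the hypotheses [hyps]: the
   lattice rules, the Kleene rule [s <= s' -> t' <= t -> s <= t] and
   transitivity through one hypothesis; [d] bounds the nesting of the two
   last rules and [n] the total depth.  Nested [if]s rather than [&&] and [||]
   make evaluation by [vm_compute] short-circuit. *)
Fixpoint prove (d n : nat) (s t : nterm) {struct n} : bool :=
  if n is n.+1 then
    if [|| s == t, s == NBot | t == NTop] then true else
    if join_args s is Some (s1, s2) then
      (if prove d n s1 t then prove d n s2 t else false) else
    if meet_args t is Some (t1, t2) then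
      (if prove d n s t1 then prove d n s t2 else false) else
    if (if meet_args s is Some (s1, s2) then
          (if prove d n s1 t then true else prove d n s2 t) else false) then true else
    if (if join_args t is Some (t1, t2) then
          (if prove d n s t1 then true else prove d n s t2) else false) then true else
    if d is d.+1 then
      if (if prove d n s (nneg s) then prove d n (nneg t) t else false) then true else
      has (fun h => if prove d n s h.1 then prove d n h.2 t else false) hyps
    else false
  else false.

Definition derivable (s t : nterm) : bool := prove 2 60 s t.

Variables (A : Alg) (HA : is_PKL A) (rho : nat -> A).

Fixpoint neval (s : nterm) : A :=
  match s with
  | NVar i => rho i | NCoVar i => ng (rho i) | NBot => zr A | NTop => on A
  | NMeet s1 s2 => mt (neval s1) (neval s2)
  | NJoin s1 s2 => jn (neval s1) (neval s2)
  end.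

Lemma neval_neg s : neval (nneg s) = ng (neval s).
Proof.
elim: s => [i|i|||s1 IH1 s2 IH2|s1 IH1 s2 IH2] //=.
- by rewrite negK.
- by rewrite neg0.
- by rewrite neg1.
- by rewrite IH1 IH2 negM.
- by rewrite IH1 IH2 negJ.
Qed.

Definition hyps_hold : Prop :=
  forall h, h \in hyps -> ale (neval h.1) (neval h.2).

Hypothesis hyps_valid : hyps_hold.

Lemma prove_sound n d s t : prove d n s t -> ale (neval s) (neval t).
Proof.
elim: n d s t => [//|n IH] d s t /=.
case: ifP => [/or3P[/eqP-> | /eqP-> | /eqP->] _ | _].
- exact: alexx.
- exact: ale0x.
- exact: alex1.
case Es: (join_args s) => [[s1 s2]|].
  rewrite (join_argsP Es) /=; case: ifP => // /IH s1t /IH s2t.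
  exact: ale_join.
case Et: (meet_args t) => [[t1 t2]|].
  rewrite (meet_argsP Et) /=; case: ifP => // /IH st1 /IH st2.
  exact: ale_meet.
case: ifP => [left_meet _ | _].
  case Es': (meet_args s) left_meet => [[s1 s2]|//]; rewrite (meet_argsP Es') /=.
  case: ifP => [/IH s1t _ | _ /IH s2t].
    exact: ale_meet_trans_l.
  exact: ale_meet_trans_r.
case: ifP => [right_join _ | _].
  case Et': (join_args t) right_join => [[t1 t2]|//]; rewrite (join_argsP Et') /=.
  case: ifP => [/IH st1 _ | _ /IH st2].
    exact: ale_join_trans_l.
  exact: ale_join_trans_r.
case: d => [//|d]; case: ifP => [kleene _ | _].
  case: ifP kleene => // /IH ss' /IH t't.
  by apply: (ale_kleene HA); rewrite -neval_neg.
case/hasP => -[h1 h2] /hyps_valid /= h12; case: ifP => // /IH sh1 /IH h2t.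
exact: (ale_trans HA sh1 (ale_trans HA h12 h2t)).
Qed.

Lemma derivable_sound s t : derivable s t -> ale (neval s) (neval t).
Proof. exact: prove_sound. Qed.

End Prover.

Section Tabulate.
Variables (T X : Type) (enum : seq T) (code : T -> nat) (t0 : T).
Hypothesis code_lt : forall x, code x < size enum.
Hypothesis nth_code : forall x, nth t0 enum (code x) = x.

Definition tabulate (f : T -> T -> X) : seq (seq X) :=
  [seq [seq f x y | y <- enum] | x <- enum].
Definition lookup (x0 : X) (t : seq (seq X)) (x y : T) : X :=
  nth x0 (nth [::] t (code x)) (code y).

Lemma lookup_tabulate x0 f x y : lookup x0 (tabulate f) x y = f x y.
Proof. by rewrite /lookup (nth_map t0) // (nth_map t0) // !nth_code. Qed.

End Tabulate.

Record fin_enum (B : Alg) := FinEnum {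
  elems : seq B;
  ecode : B -> nat;
  ecode_lt : forall b, ecode b < size elems;
  nth_ecode : forall b, nth (zr B) elems (ecode b) = b;
  emeet : B -> B -> B;
  ejoin : B -> B -> B;
  emeetE : forall b c, mt b c = emeet b c;
  ejoinE : forall b c, jn b c = ejoin b c }.

Section FinEnumTheory.
Variables (B : Alg) (F : fin_enum B).

Lemma all_elemsP (P : pred B) : all P (elems F) -> forall b, P b.
Proof.
move=> /(all_nthP (zr B)) allP b.
by rewrite -(nth_ecode F b); apply: allP; exact: ecode_lt.
Qed.

Lemma has_elemsP (P : pred B) : has P (elems F) -> exists b, P b.
Proof. by case/(has_nthP (zr B)) => i _ Pi; exists (nth (zr B) (elems F) i). Qed.

Definition ecode_eq (b c : B) : bool := ecode F b == ecode F c.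

Lemma ecode_eqP b c : ecode_eq b c -> b = c.
Proof. by move/eqP => bc; rewrite -(nth_ecode F b) bc nth_ecode. Qed.

Lemma ecode_eq_refl b : ecode_eq b b. Proof. exact: eqxx. Qed.

Definition elookup (t : seq (seq bool)) : B -> B -> bool := lookup (ecode F) false t.
Definition etabulate (f : B -> B -> bool) : seq (seq bool) := tabulate (elems F) f.

Lemma elookup_tabulate f b c : elookup (etabulate f) b c = f b c.
Proof. exact: lookup_tabulate (ecode_lt F) (nth_ecode F) _ _ _ _. Qed.

Definition pkl_check : bool :=
  let s := elems F in let m := emeet F in let j := ejoin F in
  [&& all (fun x => all (fun y =>
        [&& ecode_eq (m x y) (m y x), ecode_eq (j x y) (j y x),
            ecode_eq (m x (j x y)) x & ecode_eq (j x (m x y)) x]) s) s,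
      all (fun x => all (fun y => all (fun z =>
        ecode_eq (m x (m y z)) (m (m x y) z) &&
        ecode_eq (j x (j y z)) (j (j x y) z)) s) s) s,
      all (fun x => [&& ecode_eq (m x (on B)) x, ecode_eq (j x (zr B)) x
                      & ecode_eq (ng (ng x)) x]) s
    & all (fun x => all (fun y =>
        (ecode_eq (m x y) x ==> ecode_eq (m (ng y) (ng x)) (ng y)) &&
        ecode_eq (m (m x (ng x)) (j y (ng y))) (m x (ng x))) s) s].

Lemma pkl_checkP : pkl_check -> is_PKL B.
Proof.
case/and4P => /all_elemsP lat2 /all_elemsP lat3 /all_elemsP lat1 /all_elemsP neg2.
have {}lat2 x y := all_elemsP (lat2 x) y.
have {}lat3 x y z := all_elemsP (all_elemsP (lat3 x) y) z.
have {}neg2 x y := all_elemsP (neg2 x) y.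
rewrite /is_PKL /ale; do !split; intros;
  rewrite ?(emeetE F) ?(ejoinE F); apply: ecode_eqP.
- by case/and4P: (lat2 x y).
- by case/and4P: (lat2 x y).
- by case/andP: (lat3 x y z).
- by case/andP: (lat3 x y z).
- by case/and4P: (lat2 x y).
- by case/and4P: (lat2 x y).
- by case/and3P: (lat1 x).
- by case/and3P: (lat1 x).
- by case/and3P: (lat1 x).
- by case/andP: (neg2 x y); rewrite -!(emeetE F) H ecode_eq_refl.
- by case/andP: (neg2 x y).
Qed.

End FinEnumTheory.

Section FinAlgEnum.
Variables (T : Type) (enum : seq T) (code : T -> nat) (cov : seq (nat * nat)).
Variables (neg : T -> T) (bot top : T).
Hypothesis code_lt : forall x, code x < size enum.
Hypothesis nth_code : forall x, nth bot enum (code x) = x.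

Let le := fle enum code cov.
Let fast_le := lookup code false (tabulate enum le).

Definition glb_wrt (r : rel T) (x y z : T) : bool :=
  [&& r z x, r z y & all (fun w => (r w x && r w y) ==> r w z) enum].
Definition lub_wrt (r : rel T) (x y z : T) : bool :=
  [&& r x z, r y z & all (fun w => (r x w && r y w) ==> r z w) enum].

(* [fmeet] and [fjoin] recompute the order from the covering relation at
   every call; tabulating the order first makes them fast. *)
Definition fast_meet : T -> T -> T :=
  lookup code bot (tabulate enum (fun x y => head x (filter (glb_wrt fast_le x y) enum))).
Definition fast_join : T -> T -> T :=
  lookup code bot (tabulate enum (fun x y => head x (filter (lub_wrt fast_le x y) enum))).

Lemma fast_leE : fast_le =2 le.
Proof. by move=> x y; rewrite /fast_le (lookup_tabulate code_lt nth_code). Qed.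

Lemma fast_meetE x y : fmeet enum code cov x y = fast_meet x y.
Proof.
rewrite /fast_meet (lookup_tabulate code_lt nth_code); congr head; apply: eq_filter => z.
by rewrite /glb_wrt !fast_leE; congr [&& _, _ & _]; apply: eq_all => w; rewrite !fast_leE.
Qed.

Lemma fast_joinE x y : fjoin enum code cov x y = fast_join x y.
Proof.
rewrite /fast_join (lookup_tabulate code_lt nth_code); congr head; apply: eq_filter => z.
by rewrite /lub_wrt !fast_leE; congr [&& _, _ & _]; apply: eq_all => w; rewrite !fast_leE.
Qed.

Definition fin_alg_enum : fin_enum (fin_alg enum code cov neg bot top) :=
  @FinEnum (fin_alg enum code cov neg bot top) enum code code_lt nth_code
    fast_meet fast_join fast_meetE fast_joinE.

End FinAlgEnum.

Section Reach.
Variables (B : Alg) (F : fin_enum B) (b0 c0 : B).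

Definition reach_step (r : B -> B -> bool) (b c : B) : bool :=
  [|| r b c, r c b, r (ng b) (ng c)
    | has (fun d => r (emeet F b d) (emeet F c d) || r (ejoin F b d) (ejoin F c d))
          (elems F)].

Definition reach_table (n : nat) : seq (seq bool) :=
  iter n (fun t => etabulate F (reach_step (elookup F t)))
    (etabulate F (fun b c => ecode_eq F b b0 && ecode_eq F c c0)).

(* [(b0, c0)] is reached from every pair of distinct elements by a chain of
   swaps and translations [ng], [mt _ d], [jn _ d]; the reachable set grows at
   every round until it is stable, so [|B|^2] rounds suffice. *)
Definition reachable_from_all : bool :=
  let t := reach_table (size (elems F) ^ 2) in
  all (fun b => all (fun c => ecode_eq F b c || elookup F t b c) (elems F)) (elems F).

Variable R : B -> B -> Prop.
Hypothesis R_sym : forall b c, R b c -> R c b.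
Hypothesis R_neg : forall b c, R b c -> R (ng b) (ng c).
Hypothesis R_meet : forall b c d, R b c -> R (mt b d) (mt c d).
Hypothesis R_join : forall b c d, R b c -> R (jn b d) (jn c d).
Hypothesis not_R_b0c0 : ~ R b0 c0.

Lemma reach_table_sound n b c : elookup F (reach_table n) b c -> ~ R b c.
Proof.
elim: n b c => [|n IH] b c /=; rewrite elookup_tabulate.
  by case/andP => /ecode_eqP-> /ecode_eqP->.
case/or4P => [/IH // | /IH nRcb /R_sym // | /IH nR /R_neg //|].
case/has_elemsP => d /orP[/IH nR /(R_meet d) | /IH nR /(R_join d)];
  by rewrite ?(emeetE F) ?(ejoinE F).
Qed.

Lemma reachable_from_all_sound : reachable_from_all -> forall b c, R b c -> b = c.
Proof.
move=> /all_elemsP reach b c Rbc; move: (all_elemsP (reach b) c).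
by case/orP => [/ecode_eqP // | /reach_table_sound].
Qed.

End Reach.

Definition inherits_identities (B A : Alg) : Prop :=
  forall e, satisfies A e -> satisfies B e.

Section Intervals.
Variables (A B : Alg) (HA : is_PKL A) (HB : is_PKL B) (lam : B -> A).
Hypothesis lam_meet : forall b c, ale (lam (mt b c)) (lam b).
Hypothesis lam_join : forall b c, ale (lam (jn b c)) (jn (lam b) (lam c)).
Hypothesis lam_neg : forall b, ale (lam b) (ng (lam (ng b))).
Hypothesis lam_zero : lam (zr B) = zr A.

Definition in_interval (b : B) (u : A) : Prop :=
  ale (lam b) u /\ ale u (ng (lam (ng b))).

Lemma in_interval_lam b : in_interval b (lam b).
Proof. by split; [exact: alexx | exact: lam_neg]. Qed.

Lemma in_interval_meet b c u v :
  in_interval b u -> in_interval c v -> in_interval (mt b c) (mt u v).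
Proof.
move=> [bu ub] [cv vc]; split.
  apply: (ale_meet HA); first exact: (ale_trans HA (lam_meet b c) bu).
  by apply: (ale_trans HA _ cv); rewrite (meetC HB); exact: lam_meet.
rewrite (negM HB); apply: (ale_trans HA _ (ale_neg HA (lam_join _ _))).
by rewrite (negJ HA); apply: (ale_meet HA);
  [exact: ale_meet_trans_l | exact: ale_meet_trans_r].
Qed.

Lemma in_interval_join b c u v :
  in_interval b u -> in_interval c v -> in_interval (jn b c) (jn u v).
Proof.
move=> [bu ub] [cv vc]; split.
  apply: (ale_trans HA (lam_join b c) _).
  by apply: (ale_join HA); [exact: ale_join_trans_l | exact: ale_join_trans_r].
rewrite (negJ HB); apply: (ale_join HA).
  by apply: (ale_trans HA ub _); apply: (ale_neg HA); exact: lam_meet.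
by apply: (ale_trans HA vc _); apply: (ale_neg HA); rewrite (meetC HB); exact: lam_meet.
Qed.

Lemma in_interval_neg b u : in_interval b u -> in_interval (ng b) (ng u).
Proof.
by move=> [bu ub]; split; [exact: ale_negr | rewrite (negK HB); exact: ale_neg].
Qed.

Lemma in_interval_zero : in_interval (zr B) (zr A).
Proof. by split; [rewrite lam_zero; exact: alexx | exact: ale0x]. Qed.

Lemma in_interval_one : in_interval (on B) (on A).
Proof.
split; first exact: alex1.
by rewrite (neg1 HB) lam_zero (neg0 HA); exact: alexx.
Qed.

Lemma teval_in_interval (v : nat -> B) t :
  in_interval (teval v t) (teval (lam \o v) t).
Proof.
elim: t => [i|p IHp q IHq|p IHp q IHq|p IHp||] /=.
- exact: in_interval_lam.
- exact: in_interval_meet.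
- exact: in_interval_join.
- exact: in_interval_neg.
- exact: in_interval_zero.
- exact: in_interval_one.
Qed.

Definition overlap (b c : B) : Prop := exists u, in_interval b u /\ in_interval c u.

Lemma overlap_sym b c : overlap b c -> overlap c b.
Proof. by case=> u [bu cu]; exists u. Qed.

Lemma overlap_neg b c : overlap b c -> overlap (ng b) (ng c).
Proof. by case=> u [bu cu]; exists (ng u); split; exact: in_interval_neg. Qed.

Lemma overlap_meet b c d : overlap b c -> overlap (mt b d) (mt c d).
Proof.
case=> u [bu cu]; exists (mt u (lam d)).
by split; apply: in_interval_meet => //; exact: in_interval_lam.
Qed.

Lemma overlap_join b c d : overlap b c -> overlap (jn b d) (jn c d).
Proof.
case=> u [bu cu]; exists (jn u (lam d)).
by split; apply: in_interval_join => //; exact: in_interval_lam.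
Qed.

(* With pairwise disjoint intervals, the union of the intervals is a
   subalgebra of [A] mapped onto [B] by [u |-> b] for [u] in the interval
   of [b]; hence [B] is in the variety generated by [A]. *)
Lemma inherits_of_disjoint_intervals :
  (forall b c, overlap b c -> b = c) -> inherits_identities B A.
Proof.
move=> disjoint e HAe v; apply: disjoint; exists (teval (lam \o v) e.2).
by rewrite -{1}(HAe (lam \o v)); split; exact: teval_in_interval.
Qed.

End Intervals.

Section IntervalTerms.
Variables (B : Alg) (F : fin_enum B) (hyps : seq (nterm * nterm)) (lamT : B -> nterm).

Definition interval_terms_ok : bool :=
  all (fun b => derivable hyps (lamT b) (nneg (lamT (ng b))) &&
    all (fun c => derivable hyps (lamT (emeet F b c)) (lamT b) &&
                  derivable hyps (lamT (ejoin F b c)) (NJoin (lamT b) (lamT c)))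
      (elems F)) (elems F).

Variables (A : Alg) (HA : is_PKL A) (HB : is_PKL B) (rho : nat -> A).
Hypothesis hyps_valid : hyps_hold hyps rho.

Lemma inherits_of_interval_terms b0 c0 :
  interval_terms_ok -> lamT (zr B) = NBot -> reachable_from_all F b0 c0 ->
  ~ ale (neval rho (lamT c0)) (ng (neval rho (lamT (ng b0)))) ->
  inherits_identities B A.
Proof.
move=> /all_elemsP ok lam0 reach sep0.
pose lam b := neval rho (lamT b).
have sound := derivable_sound HA hyps_valid.
have lam_neg b : ale (lam b) (ng (lam (ng b))).
  by rewrite -neval_neg //; apply: sound; case/andP: (ok b).
have ok2 b c := all_elemsP (proj2 (andP (ok b))) c.
have lam_meet b c : ale (lam (mt b c)) (lam b).
  by rewrite /lam (emeetE F); apply: sound; case/andP: (ok2 b c).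
have lam_join b c : ale (lam (jn b c)) (jn (lam b) (lam c)).
  by rewrite /lam (ejoinE F); apply: (sound _ (NJoin _ _)); case/andP: (ok2 b c).
have lam_zero : lam (zr B) = zr A by rewrite /lam lam0.
apply: (inherits_of_disjoint_intervals HA HB lam_meet lam_join lam_neg lam_zero).
apply: (reachable_from_all_sound (R := overlap lam)) reach.
- exact: overlap_sym.
- exact: overlap_neg.
- exact: overlap_meet.
- exact: overlap_join.
- by case=> u [[_ ub0] [c0u _]]; apply: sep0; exact: (ale_trans HA c0u ub0).
Qed.

End IntervalTerms.

Definition with_contrapositives (hyps : seq (nterm * nterm)) : seq (nterm * nterm) :=
  hyps ++ [seq (nneg h.2, nneg h.1) | h <- hyps].

Lemma with_contrapositives_hold (A : Alg) (HA : is_PKL A) (rho : nat -> A) hyps :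
  hyps_hold hyps rho -> hyps_hold (with_contrapositives hyps) rho.
Proof.
move=> H h; rewrite mem_cat => /orP[/H // | /mapP[[h1 h2] /H h12 ->]] /=.
by rewrite !neval_neg //; exact: ale_neg.
Qed.

Definition val2 (A : Alg) (x y : A) (i : nat) : A := if i is 0 then x else y.

(* The terms of the construction, in the variables [x] and [y]:
   SP1 at [x <= y] says [z = k -> b = a], SP2 says [k = m]. *)
Definition nx := NVar 0.
Definition ny := NVar 1.
Definition np := NMeet nx (nneg nx).
Definition nq := NMeet ny (nneg ny).
Definition nk := NJoin np nq.
Definition na := NJoin nx nq.
Definition nb := NMeet ny (NJoin nx (nneg nx)).
Definition nz := NMeet (nneg nx) ny.
Definition nm := NMeet nz (nneg nz).

Definition B6_enum : fin_enum B6. Proof. by apply: fin_alg_enum; case. Defined.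
Definition B8s_enum : fin_enum B8s. Proof. by apply: fin_alg_enum; case. Defined.
Definition B10_enum : fin_enum B10. Proof. by apply: fin_alg_enum; case. Defined.

Lemma B6_PKL : is_PKL B6. Proof. by apply: (@pkl_checkP _ B6_enum); vm_compute. Qed.
Lemma B8s_PKL : is_PKL B8s. Proof. by apply: (@pkl_checkP _ B8s_enum); vm_compute. Qed.
Lemma B10_PKL : is_PKL B10. Proof. by apply: (@pkl_checkP _ B10_enum); vm_compute. Qed.

Lemma B6_not_SPOML : ~ is_SPOML B6.
Proof. by case=> /(_ b6_x b6_y) + _; vm_compute => /(_ erefl erefl). Qed.
Lemma B8s_not_SPOML : ~ is_SPOML B8s.
Proof. by case=> _ /(_ b8_x b8_y'); vm_compute => /(_ erefl). Qed.
Lemma B10_not_SPOML : ~ is_SPOML B10.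
Proof. by case=> _ /(_ b10_x b10_y); vm_compute => /(_ erefl). Qed.

Definition lam6 (b : E6) : nterm :=
  match b with
  | b6_0 => NBot | b6_x => na | b6_y => nb | b6_y' => nneg nb | b6_x' => nneg na
  | b6_1 => NJoin nb (nneg na)
  end.
Definition hyps6 := with_contrapositives [:: (nx, ny); (nz, nk)].

Lemma B6_certificate :
  interval_terms_ok B6_enum hyps6 lam6 && reachable_from_all B6_enum b6_x b6_y.
Proof. by vm_compute. Qed.

Definition lam8_a (b : E8) : nterm :=
  match b with
  | b8_0 => NBot | b8_x => nq | b8_y => nx | b8_z => NMeet nm na
  | b8_z' => NJoin nx (NMeet nm na) | b8_y' => nneg nx | b8_x' => nneg nk
  | b8_1 => NJoin (nneg nx) (nneg nk)
  end.
Definition lam8_b (b : E8) : nterm :=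
  match b with
  | b8_0 => NBot | b8_x => np | b8_y => nneg ny | b8_z => NMeet nm (nneg nb)
  | b8_z' => NJoin (nneg ny) (NMeet nm (nneg nb)) | b8_y' => ny | b8_x' => nneg nk
  | b8_1 => NJoin ny (nneg nk)
  end.
Definition hyps8 := with_contrapositives [:: (nx, ny)].

Lemma B8s_certificate :
  [&& interval_terms_ok B8s_enum hyps8 lam8_a, interval_terms_ok B8s_enum hyps8 lam8_b
    & reachable_from_all B8s_enum b8_x b8_z].
Proof. by vm_compute. Qed.

Definition lam10 (b : E10) : nterm :=
  match b with
  | b10_0 => NBot | b10_x => na | b10_y' => nneg nb | b10_m => nm
  | b10_a => NJoin na nm | b10_a' => NJoin (nneg nb) nm | b10_x' => nneg na
  | b10_y => nb | b10_m' => NJoin (NJoin na (nneg nb)) nm | b10_1 => NJoin (nneg na) nb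
  end.
Definition hyps10 :=
  with_contrapositives [:: (nx, ny); (NMeet nm na, nk); (NMeet nm (nneg nb), nk)].

Lemma B10_certificate :
  interval_terms_ok B10_enum hyps10 lam10 && reachable_from_all B10_enum b10_0 b10_m.
Proof. by vm_compute. Qed.

Section SPFailure.
Variables (A : Alg) (HA : is_PKL A) (x y : A).
Hypothesis xy : ale x y.
Local Notation rho := (val2 x y).

Lemma hyps8_hold : hyps_hold hyps8 rho.
Proof. by apply: with_contrapositives_hold => // h; rewrite inE => /eqP->. Qed.

Lemma B6_inherits_of_SP1_failure :
  mt (ng x) y = jn (mt x (ng x)) (mt y (ng y)) ->
  mt y (jn x (ng x)) <> jn x (mt y (ng y)) -> inherits_identities B6 A.
Proof.
move=> z_eq_k b_neq_a.
have hyps_ok : hyps_hold hyps6 rho.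
  apply: with_contrapositives_hold => // h; rewrite !inE => /orP[] /eqP-> //=.
  by rewrite z_eq_k; exact: alexx.
have a_le_b : ale (neval rho na) (neval rho nb).
  by apply: (derivable_sound HA hyps_ok); vm_compute.
case/andP: B6_certificate => ok reach.
apply: (inherits_of_interval_terms HA B6_PKL hyps_ok ok erefl reach).
change (~ ale (neval rho nb) (ng (neval rho (nneg na)))).
rewrite (neval_neg HA) (negK HA) => b_le_a.
by apply: b_neq_a; exact: (ale_anti HA b_le_a a_le_b).
Qed.

Lemma B8s_inherits_of_meet_a :
  ~ ale (neval rho (NMeet nm na)) (neval rho nk) -> inherits_identities B8s A.
Proof.
move=> ma_nle_k; case/and3P: B8s_certificate => ok _ reach.
apply: (inherits_of_interval_terms HA B8s_PKL hyps8_hold ok erefl reach).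
change (~ ale (neval rho (NMeet nm na)) (ng (neval rho (nneg nk)))).
by rewrite (neval_neg HA) (negK HA).
Qed.

Lemma B8s_inherits_of_meet_negb :
  ~ ale (neval rho (NMeet nm (nneg nb))) (neval rho nk) -> inherits_identities B8s A.
Proof.
move=> mb_nle_k; case/and3P: B8s_certificate => _ ok reach.
apply: (inherits_of_interval_terms HA B8s_PKL hyps8_hold ok erefl reach).
change (~ ale (neval rho (NMeet nm (nneg nb))) (ng (neval rho (nneg nk)))).
by rewrite (neval_neg HA) (negK HA).
Qed.

Lemma B10_inherits :
  ale (neval rho (NMeet nm na)) (neval rho nk) ->
  ale (neval rho (NMeet nm (nneg nb))) (neval rho nk) ->
  ~ ale (neval rho nm) (neval rho nk) -> inherits_identities B10 A.
Proof.
move=> ma_le_k mb_le_k m_nle_k.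
have hyps_ok : hyps_hold hyps10 rho.
  by apply: with_contrapositives_hold => // h; rewrite !inE => /or3P[] /eqP->.
case/andP: B10_certificate => ok reach.
apply: (inherits_of_interval_terms HA B10_PKL hyps_ok ok erefl reach).
change (~ ale (neval rho nm) (ng (jn (neval rho (nneg na)) (neval rho nb)))).
rewrite (negJ HA) (neval_neg HA) (negK HA) => m_le_ab'; apply: m_nle_k.
have m_le_a : ale (neval rho nm) (neval rho na).
  exact: (ale_trans HA m_le_ab' (ale_meetl HA _ _)).
by rewrite -m_le_a.
Qed.

Lemma inherits_of_SP2_failure :
  jn (mt x (ng x)) (mt y (ng y)) <> mt (mt (ng x) y) (ng (mt (ng x) y)) ->
  inherits_identities B8s A \/ inherits_identities B10 A.
Proof.
move=> k_neq_m.
have m_E : neval rho nm = mt (mt (ng x) y) (ng (mt (ng x) y)).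
  by rewrite /= (negM HA) (negK HA).
have k_le_m : ale (neval rho nk) (neval rho nm).
  by apply: (derivable_sound HA hyps8_hold); vm_compute.
have m_nle_k : ~ ale (neval rho nm) (neval rho nk).
  by move=> m_le_k; apply: k_neq_m; rewrite -m_E; exact: (ale_anti HA k_le_m m_le_k).
case: (classic (ale (neval rho (NMeet nm na)) (neval rho nk))) => [ma_le_k | ?];
  last by left; exact: B8s_inherits_of_meet_a.
case: (classic (ale (neval rho (NMeet nm (nneg nb))) (neval rho nk))) => [mb_le_k | ?];
  last by left; exact: B8s_inherits_of_meet_negb.
by right; exact: B10_inherits.
Qed.

End SPFailure.

Lemma inherits_of_not_SPOML (A : Alg) : is_PKL A -> ~ is_SPOML A ->
  [\/ inherits_identities B6 A, inherits_identities B8s A | inherits_identities B10 A].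
Proof.
move=> HA not_SPOML; apply: NNPP => none; apply: not_SPOML; split.
  move=> x y xy z_eq_k; apply: NNPP => b_neq_a; apply: none.
  by apply: Or31; exact: (B6_inherits_of_SP1_failure HA xy z_eq_k b_neq_a).
move=> x y xy; apply: NNPP => k_neq_m; apply: none.
by case: (inherits_of_SP2_failure HA xy k_neq_m); [apply: Or32 | apply: Or33].
Qed.

Lemma SPOML_iso (A B : Alg) : alg_iso A B -> is_SPOML A -> is_SPOML B.
Proof.
case=> f [g [fK [gK [fm [fj [fn _]]]]]] [SP1 SP2].
have gm u v : g (mt u v) = mt (g u) (g v) by rewrite -{1}(gK u) -{1}(gK v) -fm fK.
have gj u v : g (jn u v) = jn (g u) (g v) by rewrite -{1}(gK u) -{1}(gK v) -fj fK.
have gn u : g (ng u) = ng (g u) by rewrite -{1}(gK u) -fn fK.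
have g_ale u v : ale u v -> ale (g u) (g v) by rewrite /ale -gm => ->.
split=> [x y /g_ale xy z_eq_k | x y /g_ale xy]; apply: (can_inj gK).
  by rewrite !(gm, gj, gn) SP1 // -!(gm, gj, gn) z_eq_k.
by rewrite !(gm, gj, gn) SP2.
Qed.

Lemma alg_iso_refl (A : Alg) : alg_iso A A.
Proof. by exists id, id. Qed.

Lemma in_subvariety_inherits E (A B : Alg) :
  in_subvariety E A -> is_PKL B -> inherits_identities B A -> in_subvariety E B.
Proof. by move=> [_ AE] HB inh; split=> // e /AE; exact: inh. Qed.

Theorem corollary4p3 (E : term * term -> Prop) :
  (forall A : Alg, in_subvariety E A -> is_SPOML A) <->
  ~ (exists A : Alg, in_subvariety E A /\
       (alg_iso A B6 \/ alg_iso A B8s \/ alg_iso A B10)).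
Proof.
split=> [all_SPOML [A [AE [iso|[iso|iso]]]] | none A AE].
- by apply: B6_not_SPOML; exact: SPOML_iso iso (all_SPOML A AE).
- by apply: B8s_not_SPOML; exact: SPOML_iso iso (all_SPOML A AE).
- by apply: B10_not_SPOML; exact: SPOML_iso iso (all_SPOML A AE).
apply: NNPP => not_SPOML; apply: none.
case: (inherits_of_not_SPOML AE.1 not_SPOML) => inh.
- exists B6; split; first exact: in_subvariety_inherits AE B6_PKL inh.
  by left; exact: alg_iso_refl.
- exists B8s; split; first exact: in_subvariety_inherits AE B8s_PKL inh.
  by right; left; exact: alg_iso_refl.
- exists B10; split; first exact: in_subvariety_inherits AE B10_PKL inh.
  by right; right; exact: alg_iso_refl.
Qed.
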